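(* Let $i,j\in I$, $c_1:=-\langle h_i,\alpha_j\rangle$, $c_2:=-\langle h_j,\alpha_i\rangle$, and suppose $c_1c_2=2$. Define $\phi^{(2)}_{ij}:B_i\otimes B_j\otimes B_i\otimes B_j\to B_j\otimes B_i\otimes B_j\otimes B_i$ by $\phi^{(2)}_{ij}((x)_i\otimes(y)_j\otimes(z)_i\otimes(w)_j)=(X)_j\otimes(Y)_i\otimes(Z)_j\otimes(W)_i$, where $$X=w+(-c_2x+y-w+c_2(x-c_1y+z)_+)_+,\qquad Y=x+c_1w+(-x+z-c_1w+(x-c_1y+z)_+)_+,$$ $$Z=y-(-c_2x+y-w+c_2(x-c_1y+z)_+)_+,\qquad W=z-c_1w-(-x+z-c_1w+(x-c_1y+z)_+)_+.$$ Then $\phi^{(2)}_{ij}$ is an isomorphism of crystals.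
   Context: Let $\mathfrak g$ be a symmetrizable Kac–Moody algebra with finite index set $I$, weight lattice $P$, simple roots $\alpha_i$ and simple coroots $h_i$ ($i\in I$), with pairing $\langle\cdot,\cdot\rangle$. A crystal is a set $B$ with maps $wt:B\to P$, $\varepsilon_i,\varphi_i:B\to\mathbb Z\sqcup\{-\infty\}$, $\tilde e_i,\tilde f_i:B\sqcup\{0\}\to B\sqcup\{0\}$ ($i\in I$) such that $\varphi_i(b)=\varepsilon_i(b)+\langle h_i,wt(b)\rangle$; $wt(\tilde e_ib)=wt(b)+\alpha_i$ if $\tilde e_ib\in B$; $wt(\tilde f_ib)=wt(b)-\alpha_i$ if $\tilde f_ib\in B$; $\tilde e_ib_2=b_1\iff\tilde f_ib_1=b_2$; $\varepsilon_i(b)=-\infty$ implies $\tilde e_ib=\tilde f_ib=0$; $\tilde e_i0=\tilde f_i0=0$. A strict morphism $\psi:B_1\to B_2$ is a map $B_1\sqcup\{0\}\to B_2\sqcup\{0\}$ with $\psi(0)=0$, preserving $wt,\varepsilon_i,\varphi_i$ on elements $b$ with $\psi(b)\neq0$, and commuting with all $\tilde e_i,\tilde f_i$; an isomorphism of crystals is a bijective strict morphism. The tensor product $B_1\otimes B_2=\{b_1\otimes b_2\}$ has $wt(b_1\otimes b_2)=wt(b_1)+wt(b_2)$, $\varepsilon_i(b_1\otimes b_2)=\max(\varepsilon_i(b_1),\varepsilon_i(b_2)-\langle h_i,wt(b_1)\rangle)$, $\varphi_i(b_1\otimes b_2)=\max(\varphi_i(b_2),\varphi_i(b_1)+\langle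 h_i,wt(b_2)\rangle)$, $\tilde e_i(b_1\otimes b_2)=\tilde e_ib_1\otimes b_2$ if $\varphi_i(b_1)\ge\varepsilon_i(b_2)$ and $b_1\otimes\tilde e_ib_2$ otherwise, $\tilde f_i(b_1\otimes b_2)=\tilde f_ib_1\otimes b_2$ if $\varphi_i(b_1)>\varepsilon_i(b_2)$ and $b_1\otimes\tilde f_ib_2$ otherwise (with $b\otimes0=0\otimes b=0$); it is associative. For $i\in I$, $B_i=\{(x)_i: x\in\mathbb Z\}$ is the crystal with $wt((x)_i)=x\alpha_i$, $\varepsilon_i((x)_i)=-x$, $\varphi_i((x)_i)=x$, $\varepsilon_j((x)_i)=\varphi_j((x)_i)=-\infty$ for $j\ne i$, $\tilde e_j(x)_i=\delta_{ij}(x+1)_i$, $\tilde f_j(x)_i=\delta_{ij}(x-1)_i$ (where $\delta_{ij}\cdot(\ )=0$ for $j\neq i$). For $x\in\mathbb Q$, $x_+:=\max(x,0)$. *)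

From HB Require Import structures.
From mathcomp Require Import all_boot all_order all_algebra.
Set Implicit Arguments. Unset Strict Implicit. Unset Printing Implicit Defensive.
Import Order.TTheory GRing.Theory Num.Theory.
Local Open Scope ring_scope.

(* Z ⊔ {-oo}: None stands for -oo. *)
Definition ext := option int.
Definition emax (a b : ext) : ext :=
  match a, b with
  | None, _ => b | _, None => a
  | Some x, Some y => Some (Num.max x y) end.
Definition eaddz (a : ext) (z : int) : ext := omap (fun x => x + z) a.
Definition ege (a b : ext) : bool :=
  match a, b with
  | _, None => true | None, Some _ => false
  | Some x, Some y => y <= x end.
Definition egt (a b : ext) : bool :=
  match a, b with
  | None, _ => false | Some _, None => true
  | Some x, Some y => y < x end.

Section Crystals.
Variables (I : finType) (P : zmodType).
(* alpha k = simple root alpha_k ; h k = the functional <h_k, . > on P *)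
Variables (alpha : I -> P) (h : I -> P -> int).

Definition symmetrizable_KM_data : Prop :=
  (forall k x y, h k (x + y) = h k x + h k y) /\
  [/\ (forall c : I -> int, \sum_k (alpha k) *~ (c k) = 0 -> forall k, c k = 0),
      (forall k, h k (alpha k) = 2),
      (forall k l, k != l -> h k (alpha l) <= 0),
      (forall k l, h k (alpha l) = 0 -> h l (alpha k) = 0)
    & exists d : I -> int, (forall k, 0 < d k) /\
        forall k l, d k * h k (alpha l) = d l * h l (alpha k)].

(* Crystal data: wt, eps_k, phi_k, e~_k, f~_k ; the value 0 is None. *)
Record crystal := Crystal {
  carrier : Type;
  wt : carrier -> P;
  eps : I -> carrier -> ext;
  phi : I -> carrier -> ext;
  ce : I -> carrier -> option carrier;
  cf : I -> carrier -> option carrier }.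

Definition tensor (B1 B2 : crystal) : crystal :=
  @Crystal (carrier B1 * carrier B2)
    (fun b => wt b.1 + wt b.2)
    (fun k b => emax (eps k b.1) (eaddz (eps k b.2) (- h k (wt b.1))))
    (fun k b => emax (phi k b.2) (eaddz (phi k b.1) (h k (wt b.2))))
    (fun k b => if ege (phi k b.1) (eps k b.2)
                then omap (fun x => (x, b.2)) (ce k b.1)
                else omap (fun y => (b.1, y)) (ce k b.2))
    (fun k b => if egt (phi k b.1) (eps k b.2)
                then omap (fun x => (x, b.2)) (cf k b.1)
                else omap (fun y => (b.1, y)) (cf k b.2)).

(* The crystal B_i = {(x)_i : x in Z}; (x)_i is represented by x. *)
Definition Bcr (i : I) : crystal :=
  @Crystal int
    (fun x => alpha i *~ x)
    (fun k x => if k == i then Some (- x) else None)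
    (fun k x => if k == i then Some x else None)
    (fun k x => if k == i then Some (x + 1) else None)
    (fun k x => if k == i then Some (x - 1) else None).

(* strict morphisms: maps B1 ⊔ {0} -> B2 ⊔ {0} *)
Definition strict_morphism (B1 B2 : crystal)
    (psi : option (carrier B1) -> option (carrier B2)) : Prop :=
  [/\ psi None = None,
      (forall b b', psi (Some b) = Some b' ->
         wt b' = wt b /\ forall k, eps k b' = eps k b /\ phi k b' = phi k b)
    & (forall k ob, psi (obind (ce k) ob) = obind (ce k) (psi ob) /\
                    psi (obind (cf k) ob) = obind (cf k) (psi ob))].

Definition crystal_iso (B1 B2 : crystal)
    (psi : option (carrier B1) -> option (carrier B2)) : Prop :=
  strict_morphism psi /\ bijective psi.

Definition pos (x : int) : int := Num.max x 0.

(* phi^(2)_{ij} on elements, with c1 = -<h_i,alpha_j>, c2 = -<h_j,alpha_i>;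
   tensor products are associated to the left: ((b1 ⊗ b2) ⊗ b3) ⊗ b4. *)
Definition phi2_map (c1 c2 : int) (b : ((int * int) * int) * int)
    : ((int * int) * int) * int :=
  let: (x, y, z, w) := b in
  let A := pos (- (c2 * x) + y - w + c2 * pos (x - c1 * y + z)) in
  let C := pos (- x + z - c1 * w + pos (x - c1 * y + z)) in
  (w + A, x + c1 * w + C, y - A, z - c1 * w - C).

Definition BiBjBiBj (i j : I) : crystal :=
  tensor (tensor (tensor (Bcr i) (Bcr j)) (Bcr i)) (Bcr j).

End Crystals.

From HB Require Import structures.
From mathcomp Require Import all_boot all_order all_algebra zify ring.
Set Implicit Arguments.
Unset Strict Implicit.
Unset Printing Implicit Defensive.
Import Order.TTheory GRing.Theory Num.Theory.
Local Open Scope ring_scope.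

(* Every piece of crystal data of B_i ⊗ B_j ⊗ B_i ⊗ B_j is an explicit
   piecewise-linear function of (x, y, z, w): e.g.
   eps_i = max(-x, c1 y - 2x - z), and e~_i raises x or z according to the
   sign of x - c1 y + z. Since phi_k = eps_k + <h_k, wt> holds in any tensor
   product of the B_k, it is enough that phi^(2) preserves wt and eps and
   intertwines e~ and f~. As c1 c2 = 2 forces {c1, c2} = {1, 2}, these are
   finitely many piecewise-linear identities, and phi^(2)_ji is the inverse
   of phi^(2)_ij. *)

Section Pairing.
Variables (I : finType) (P : zmodType) (h : I -> P -> int).
Hypothesis h_additive : forall k x y, h k (x + y) = h k x + h k y.

Lemma pairingMz k (a : P) (n : int) : h k (a *~ n) = h k a * n.
Proof.
have h0 : h k 0 = 0 by apply: (@addrI _ (h k 0)); rewrite -h_additive !addr0.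
pose hk : {additive P -> int} :=
  HB.pack (h k) (GRing.isNmodMorphism.Build _ _ (h k) (h0, h_additive k)).
by rewrite -mulrzz -[h k]/(hk : P -> int) raddfMz.
Qed.

End Pairing.

Section WeightRule.
Variables (I : finType) (P : zmodType) (alpha : I -> P) (h : I -> P -> int).
Hypothesis h_additive : forall k x y, h k (x + y) = h k x + h k y.

Definition weight_rule (B : crystal I P) : Prop :=
  forall k (b : carrier B), phi k b = eaddz (eps k b) (h k (wt b)).

Lemma Bcr_weight_rule i : h i (alpha i) = 2 -> weight_rule (Bcr alpha i).
Proof.
move=> hii k x /=; case: eqVneq => [->|] //=.
by rewrite pairingMz // hii; congr Some; lia.
Qed.

Lemma tensor_weight_rule B1 B2 :
  weight_rule B1 -> weight_rule B2 -> weight_rule (tensor h B1 B2).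
Proof.
move=> wr1 wr2 k [b1 b2] /=; rewrite wr1 wr2 h_additive.
by case: (eps k b1) (eps k b2) => [?|] [?|] //=; congr Some; lia.
Qed.

(* Thanks to the weight rule, phi need not be checked separately. *)
Lemma omap_strict_morphism (B1 B2 : crystal I P)
    (f : carrier B1 -> carrier B2) :
  weight_rule B1 -> weight_rule B2 ->
  (forall b, wt (f b) = wt b) -> (forall k b, eps k (f b) = eps k b) ->
  (forall k b, ce k (f b) = omap f (ce k b)) ->
  (forall k b, cf k (f b) = omap f (cf k b)) ->
  strict_morphism (omap f).
Proof.
move=> wr1 wr2 fwt feps fe ff; split=> // [b _ [<-]|k [b|]] //=.
by split=> // k; rewrite wr1 wr2 fwt feps.
Qed.

End WeightRule.

Lemma omap_bij (T U : Type) (f : T -> U) (g : U -> T) :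
  cancel f g -> cancel g f -> bijective (omap f).
Proof. by move=> fK gK; exists (omap g) => -[x|] //=; rewrite ?fK ?gK. Qed.

Notation quad := (((int * int) * int) * int)%type.

(* An element (x, y, z, w) of B_i ⊗ B_j ⊗ B_i ⊗ B_j; "odd" refers to the
   colour i of the first and third factors, "even" to the colour j of the
   others, and c to -<h_k, alpha_l> for k the colour concerned and l the other
   one. *)
Definition odd_sum (b : quad) : int := let: (x, y, z, w) := b in x + z.
Definition even_sum (b : quad) : int := let: (x, y, z, w) := b in y + w.

Definition eps_odd (c : int) (b : quad) : int :=
  let: (x, y, z, w) := b in Num.max (- x) (c * y - 2 * x - z).
Definition eps_even (c : int) (b : quad) : int :=
  let: (x, y, z, w) := b in Num.max (c * x - y) (c * (x + z) - 2 * y - w).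

Definition e_odd (c : int) (b : quad) : quad :=
  let: (x, y, z, w) := b in
  if 0 <= x - c * y + z then (x + 1, y, z, w) else (x, y, z + 1, w).
Definition f_odd (c : int) (b : quad) : quad :=
  let: (x, y, z, w) := b in
  if 0 < x - c * y + z then (x - 1, y, z, w) else (x, y, z - 1, w).
Definition e_even (c : int) (b : quad) : quad :=
  let: (x, y, z, w) := b in
  if 0 <= y - c * z + w then (x, y + 1, z, w) else (x, y, z, w + 1).
Definition f_even (c : int) (b : quad) : quad :=
  let: (x, y, z, w) := b in
  if 0 < y - c * z + w then (x, y - 1, z, w) else (x, y, z, w - 1).

Definition two_point (T : eqType) (i j : T) (A : Type) (u v : A) (k : T) :=
  if k == i then Some u else if k == j then Some v else None.

Lemma two_pointC (T : eqType) (i j : T) (A : Type) (u v : A) :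
  i != j -> two_point i j u v =1 two_point j i v u.
Proof.
by rewrite /two_point => ij k; case: eqVneq => // ->; rewrite (negbTE ij).
Qed.

Lemma omap_two_point (T : eqType) (i j : T) (A B : Type) (f : A -> B) u v k :
  omap f (two_point i j u v k) = two_point i j (f u) (f v) k.
Proof. by rewrite /two_point; case: ifP => //; case: ifP. Qed.

Section BiBjBiBj.
Variables (I : finType) (P : zmodType) (alpha : I -> P) (h : I -> P -> int).
Hypothesis h_additive : forall k x y, h k (x + y) = h k x + h k y.
Variables (i j : I).
Hypotheses (ij : i != j) (hii : h i (alpha i) = 2) (hjj : h j (alpha j) = 2).

Let ji : j != i. Proof. by rewrite eq_sym. Qed.

Notation B := (BiBjBiBj alpha h i j).

Lemma BiBjBiBj_weight_rule : weight_rule h B.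
Proof. by do !apply: tensor_weight_rule => //; exact: Bcr_weight_rule. Qed.

Lemma wt_BiBjBiBj (b : quad) :
  wt (c := B) b = alpha i *~ odd_sum b + alpha j *~ even_sum b.
Proof. by case: b => [[[x y] z] w]; rewrite /= -addrA addrACA -!mulrzDr. Qed.

Lemma eps_BiBjBiBj k (b : quad) :
  eps (c := B) k b =
  two_point i j (eps_odd (- h i (alpha j)) b) (eps_even (- h j (alpha i)) b) k.
Proof.
case: b => [[[x y] z] w]; rewrite /two_point /=.
case: (eqVneq k i) => [->|ki]; last case: (eqVneq k j) => [->|kj] //.
all: rewrite ?(negbTE ij) ?(negbTE ji) /= !h_additive !pairingMz //.
all: by rewrite ?hii ?hjj; congr Some; lia.
Qed.

Lemma ce_BiBjBiBj k (b : quad) :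
  ce (c := B) k b =
  two_point i j (e_odd (- h i (alpha j)) b) (e_even (- h j (alpha i)) b) k.
Proof.
case: b => [[[x y] z] w]; rewrite /two_point /=.
case: (eqVneq k i) => [->|ki]; last case: (eqVneq k j) => [->|kj] //.
all: rewrite ?(negbTE ij) ?(negbTE ji) /= ?h_additive ?pairingMz // ?hii ?hjj.
all: by do 2 case: ifP => ? /=; congr Some; congr (_, _, _, _); lia.
Qed.

Lemma cf_BiBjBiBj k (b : quad) :
  cf (c := B) k b =
  two_point i j (f_odd (- h i (alpha j)) b) (f_even (- h j (alpha i)) b) k.
Proof.
case: b => [[[x y] z] w]; rewrite /two_point /=.
case: (eqVneq k i) => [->|ki]; last case: (eqVneq k j) => [->|kj] //.
all: rewrite ?(negbTE ij) ?(negbTE ji) /= ?h_additive ?pairingMz // ?hii ?hjj.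
all: by do 2 case: ifP => ? /=; congr Some; congr (_, _, _, _); lia.
Qed.

End BiBjBiBj.

Lemma Cartan_product2_cases (c1 c2 : int) :
  0 <= c1 -> 0 <= c2 -> c1 * c2 = 2 -> (c1 = 1 /\ c2 = 2) \/ (c1 = 2 /\ c2 = 1).
Proof.
move=> c1_ge0 c2_ge0 c12.
have c2_gt0 : 0 < c2.
  by rewrite lt0r c2_ge0 andbT; apply: contra_eq_neq c12 => ->; rewrite mulr0.
have c1_le2 : c1 <= 2 by nia.
have : c1 = 0 \/ c1 = 1 \/ c1 = 2 by lia.
by case=> [|[|]] E; move: c12; rewrite E; lia.
Qed.

Lemma odd_sum_phi2 c1 c2 b : odd_sum (phi2_map c1 c2 b) = even_sum b.
Proof. by case: b => [[[x y] z] w] /=; ring. Qed.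

Lemma even_sum_phi2 c1 c2 b : even_sum (phi2_map c1 c2 b) = odd_sum b.
Proof. by case: b => [[[x y] z] w] /=; ring. Qed.

Section Phi2.
Variables c1 c2 : int.
Hypothesis Hc : (c1 = 1 /\ c2 = 2) \/ (c1 = 2 /\ c2 = 1).
Local Notation phi2 := (phi2_map c1 c2).

Lemma phi2_mapK : cancel phi2 (phi2_map c2 c1).
Proof.
move=> [[[x y] z] w]; rewrite /phi2_map /pos.
by case: Hc => -[-> ->]; congr (_, _, _, _); lia.
Qed.

Lemma eps_even_phi2 b : eps_even c1 (phi2 b) = eps_odd c1 b.
Proof.
case: b => [[[x y] z] w]; rewrite /phi2_map /pos /=.
by case: Hc => -[-> ->]; lia.
Qed.

Lemma eps_odd_phi2 b : eps_odd c2 (phi2 b) = eps_even c2 b.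
Proof.
case: b => [[[x y] z] w]; rewrite /phi2_map /pos /=.
by case: Hc => -[-> ->]; lia.
Qed.

Lemma phi2_e_odd b : phi2 (e_odd c1 b) = e_even c1 (phi2 b).
Proof.
case: b => [[[x y] z] w]; rewrite /phi2_map /pos /=.
by case: Hc => -[-> ->]; do 2 case: ifP => ?; congr (_, _, _, _); lia.
Qed.

Lemma phi2_e_even b : phi2 (e_even c2 b) = e_odd c2 (phi2 b).
Proof.
case: b => [[[x y] z] w]; rewrite /phi2_map /pos /=.
by case: Hc => -[-> ->]; do 2 case: ifP => ?; congr (_, _, _, _); lia.
Qed.

Lemma phi2_f_odd b : phi2 (f_odd c1 b) = f_even c1 (phi2 b).
Proof.
case: b => [[[x y] z] w]; rewrite /phi2_map /pos /=.
by case: Hc => -[-> ->]; do 2 case: ifP => ?; congr (_, _, _, _); lia.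
Qed.

Lemma phi2_f_even b : phi2 (f_even c2 b) = f_odd c2 (phi2 b).
Proof.
case: b => [[[x y] z] w]; rewrite /phi2_map /pos /=.
by case: Hc => -[-> ->]; do 2 case: ifP => ?; congr (_, _, _, _); lia.
Qed.

End Phi2.

Theorem proposition4p1 (I : finType) (P : zmodType) (alpha : I -> P)
    (h : I -> P -> int) (HKM : symmetrizable_KM_data alpha h)
    (i j : I) (c1 c2 : int)
    (Hc1 : c1 = - h i (alpha j)) (Hc2 : c2 = - h j (alpha i))
    (Hc : c1 * c2 = 2) :
  @crystal_iso I P (BiBjBiBj alpha h i j) (BiBjBiBj alpha h j i)
    (omap (phi2_map c1 c2)).
Proof.
case: HKM => hadd [_ hkk hneg _ _].
have [hii hjj] := (hkk i, hkk j).
have ij : i != j by apply/eqP=> ji; move: Hc; rewrite Hc1 Hc2 ji hkk.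
have ji : j != i by rewrite eq_sym.
have c12 : (c1 = 1 /\ c2 = 2) \/ (c1 = 2 /\ c2 = 1).
  by apply: Cartan_product2_cases; rewrite // ?Hc1 ?Hc2 oppr_ge0 hneg // eq_sym.
have c21 : (c2 = 1 /\ c1 = 2) \/ (c2 = 2 /\ c1 = 1).
  by case: c12 => -[-> ->]; [right|left].
split; last exact: omap_bij (phi2_mapK c12) (phi2_mapK c21).
apply: (omap_strict_morphism (BiBjBiBj_weight_rule hadd hii hjj)
                             (BiBjBiBj_weight_rule hadd hjj hii)).
- by move=> b; rewrite !wt_BiBjBiBj odd_sum_phi2 even_sum_phi2 addrC.
- move=> k b; rewrite !(eps_BiBjBiBj hadd) // -Hc1 -Hc2.
  by rewrite (eps_even_phi2 c12) (eps_odd_phi2 c12) two_pointC.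
- move=> k b; rewrite !(ce_BiBjBiBj hadd) // -Hc1 -Hc2 omap_two_point.
  by rewrite (phi2_e_odd c12) (phi2_e_even c12) two_pointC.
- move=> k b; rewrite !(cf_BiBjBiBj hadd) // -Hc1 -Hc2 omap_two_point.
  by rewrite (phi2_f_odd c12) (phi2_f_even c12) two_pointC.
Qed.
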